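(* Let $k\geq 2$, let $A$ and $B$ be $d\times d$ matrices with entries in $\mathbb{Z}[1/2,\zeta_{2^{k-1}}]$, and assume that $A+B\zeta_{2^k}$ is unitary. Then the $2d\times 2d$ matrix $A\otimes I_2+B\otimes\Lambda_k$ is unitary (and has entries in $\mathbb{Z}[1/2,\zeta_{2^{k-1}}]$).
   Context: $\zeta_n=e^{2\pi i/n}$; $\mathbb{Z}[1/2,\zeta_n]$ is the smallest subring of $\mathbb{C}$ containing $1/2$ and $\zeta_n$. $\Lambda_k=\begin{bmatrix}0&1\\ \zeta_{2^{k-1}}&0\end{bmatrix}$. *)

From HB Require Import structures.
From mathcomp Require Import all_boot all_order all_algebra.
From mathcomp Require Import complex mxtens.
From mathcomp Require Import reals trigo.
Set Implicit Arguments. Unset Strict Implicit. Unset Printing Implicit Defensive.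
Import Order.TTheory GRing.Theory Num.Theory.
Local Open Scope ring_scope.
Local Open Scope complex_scope.

Definition zeta (R : realType) (n : nat) : R[i] :=
  (cos (2 * pi / n%:R)) +i* (sin (2 * pi / n%:R)).

(* membership in Z[1/2, z], the smallest subring of C containing 1/2 and z:
   its elements are exactly p(z) / 2^m with p an integer polynomial. *)
Definition in_Z_half_zeta (R : realType) (z : R[i]) (x : R[i]) : Prop :=
  exists (p : {poly int}) (m : nat), x = (map_poly intr p).[z] / 2 ^+ m.

Definition adjmx (R : realType) m n (M : 'M[R[i]]_(m, n)) : 'M[R[i]]_(n, m) :=
  (map_mx (fun x => x^*) M)^T.

Definition unitary (R : realType) n (U : 'M[R[i]]_n) : Prop :=
  U *m adjmx U = 1%:M /\ adjmx U *m U = 1%:M.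

Definition Lambda (R : realType) (k : nat) : 'M[R[i]]_2 :=
  \matrix_(i < 2, j < 2)
    (if (i == 0%N :> nat) && (j == 1%N :> nat) then 1
     else if (i == 1%N :> nat) && (j == 0%N :> nat) then zeta R (2 ^ k.-1)
     else 0).

From HB Require Import structures.
From mathcomp Require Import all_boot all_order all_algebra.
From mathcomp Require Import complex mxtens.
From mathcomp Require Import reals trigo.
From mathcomp Require Import algC cyclotomic.
From mathcomp Require Import ring.
Import Order.TTheory GRing.Theory Num.Theory.
Local Open Scope ring_scope.
Set Implicit Arguments. Unset Strict Implicit.

(* Let w = zeta_(2^k), so that the entries of A and B lie in Q(w^2). Since
   X^(2^(k-1)) + 1 is irreducible over Q and even, w |-> -w induces an
   automorphism of Q(w) which fixes Q(w^2) and commutes with complex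
   conjugation; applied entrywise to the unitarity equations of A + wB it shows
   that A - wB is unitary too. Comparing the two products (A +- wB)(A +- wB)^*
   gives AA^* + BB^* = 1 and BA^* = -conj(w)^2 AB^*. As Lambda_k is unitary
   with Lambda_k^* = conj(w)^2 Lambda_k, the cross terms of
   (A (x) I + B (x) Lambda_k)(A (x) I + B (x) Lambda_k)^* then cancel. *)

Section Cis.
Variable R : realType.
Local Open Scope complex_scope.

Definition cis (t : R) : R[i] := cos t +i* sin t.

Lemma cisD s t : cis (s + t) = cis s * cis t.
Proof. by rewrite /cis cosD sinD; simpc; congr (_ +i* _); apply: addrC. Qed.

Lemma cis0 : cis 0 = 1.
Proof. by rewrite /cis cos0 sin0. Qed.

Lemma cisMn t n : cis t ^+ n = cis (t *+ n).
Proof. by elim: n => [|n IHn]; rewrite ?cis0 // exprS IHn mulrS cisD. Qed.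

Lemma conjc_cis t : conjc (cis t) = cis (- t).
Proof. by rewrite /cis cosN sinN. Qed.

Lemma cis_mul_conjc t : cis t * conjc (cis t) = 1.
Proof. by rewrite conjc_cis -cisD subrr cis0. Qed.

Lemma cispi : cis pi = -1.
Proof. by rewrite /cis cospi sinpi; apply/eqP; simpc. Qed.

Lemma zeta_mul_conjc n : zeta R n * conjc (zeta R n) = 1.
Proof. exact: cis_mul_conjc. Qed.

Lemma zeta_double_sqr n : (0 < n)%N -> zeta R (2 * n) ^+ 2 = zeta R n.
Proof.
move=> n_gt0; rewrite cisMn -mulr_natr natrM.
by congr cis; field; rewrite pnatr_eq0 -lt0n.
Qed.

Lemma zeta_double_half n : (0 < n)%N -> zeta R (2 * n) ^+ n = -1.
Proof.
move=> n_gt0; rewrite cisMn -cispi -mulr_natr natrM.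
by congr cis; field; rewrite pnatr_eq0 -lt0n.
Qed.

End Cis.

Section Tensor.
Variable R : comPzRingType.

Lemma tensmxDl m n p q (X Y : 'M[R]_(m, n)) (Z : 'M[R]_(p, q)) :
  (X + Y) *t Z = X *t Z + Y *t Z.
Proof. by apply/matrixP => i j; rewrite !mxE mulrDl. Qed.

Lemma tensmxZl m n p q a (X : 'M[R]_(m, n)) (Z : 'M[R]_(p, q)) :
  (a *: X) *t Z = a *: (X *t Z).
Proof. by apply/matrixP => i j; rewrite !mxE mulrA. Qed.

Lemma tensmxZr m n p q a (X : 'M[R]_(m, n)) (Z : 'M[R]_(p, q)) :
  X *t (a *: Z) = a *: (X *t Z).
Proof. by apply/matrixP => i j; rewrite !mxE mulrCA. Qed.

Lemma tensmxNl m n p q (X : 'M[R]_(m, n)) (Z : 'M[R]_(p, q)) : (- X) *t Z = - (X *t Z).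
Proof. by apply/matrixP => i j; rewrite !mxE mulNr. Qed.

Lemma tensmx11 m n : (1%:M : 'M[R]_m) *t (1%:M : 'M[R]_n) = 1%:M.
Proof.
apply/matrixP => i j.
case: (mxtens_indexP i) => i1 i2; case: (mxtens_indexP j) => j1 j2.
rewrite tensmxE !mxE -natrM (inj_eq (can_inj (@mxtens_indexK m n))).
by rewrite xpair_eqE mulnb.
Qed.

End Tensor.

Section Adjoint.
Variable R : realType.
Implicit Types (a c : R[i]).

Lemma adjmxD m n (X Y : 'M[R[i]]_(m, n)) : adjmx (X + Y) = adjmx X + adjmx Y.
Proof. by rewrite /adjmx map_mxD linearD. Qed.

Lemma adjmxZ m n a (X : 'M[R[i]]_(m, n)) : adjmx (a *: X) = conjc a *: adjmx X.
Proof. by rewrite /adjmx map_mxZ linearZ. Qed.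

Lemma adjmx_tens m n p q (X : 'M[R[i]]_(m, n)) (Y : 'M[R[i]]_(p, q)) :
  adjmx (X *t Y) = adjmx X *t adjmx Y.
Proof. by rewrite /adjmx map_mxT trmx_tens. Qed.

Lemma adjmx1 n : adjmx (1%:M : 'M[R[i]]_n) = 1%:M.
Proof. by rewrite /adjmx map_mx1 trmx1. Qed.

Lemma mulmx_adj_unitary n (U : 'M[R[i]]_n) : U *m adjmx U = 1%:M -> unitary U.
Proof. by move=> UU; split=> //; apply: mulmx1C. Qed.

Variables (d : nat) (A B : 'M[R[i]]_d).

Lemma mulmx_adj_addZ a : a * conjc a = 1 ->
  (A + a *: B) *m adjmx (A + a *: B) =
  (A *m adjmx A + B *m adjmx B) + (conjc a *: (A *m adjmx B) + a *: (B *m adjmx A)).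
Proof.
move=> a_unit; rewrite adjmxD adjmxZ mulmxDl !mulmxDr -!scalemxAl -!scalemxAr.
by rewrite scalerA a_unit scale1r [a *: _ + _]addrC addrACA.
Qed.

Lemma mulmx_adj_addZ_opp w : w * conjc w = 1 ->
  (A + w *: B) *m adjmx (A + w *: B) = 1%:M ->
  (A + (- w) *: B) *m adjmx (A + (- w) *: B) = 1%:M ->
  A *m adjmx A + B *m adjmx B = 1%:M /\
  B *m adjmx A = - (conjc (w ^+ 2) *: (A *m adjmx B)).
Proof.
move=> w_unit.
have wN_unit : - w * conjc (- w) = 1 by rewrite rmorphN mulrNN.
rewrite !mulmx_adj_addZ // rmorphN !scaleNr -opprD.
set X := conjc w *: _ + _ => UU UU'.
have X0 : X = 0.
  have XN : X = - X by apply: (addrI (A *m adjmx A + B *m adjmx B)); rewrite UU UU'.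
  have X2 : 2%:R *: X = 0 by rewrite scaler_nat mulr2n {1}XN addNr.
  have two_neq0 : (2%:R : R[i]) != 0 by rewrite pnatr_eq0.
  by rewrite -[X]scale1r -(mulVf two_neq0) -scalerA X2 scaler0.
split; first by rewrite -UU X0 addr0.
have := congr1 (fun Y => conjc w *: Y) X0.
rewrite /X scalerDr !scalerA [conjc w * w]mulrC w_unit scale1r scaler0 rmorphXn.
by rewrite expr2; move/eqP; rewrite addrC addr_eq0 => /eqP.
Qed.

Lemma mulmx_adj_tens m c (L : 'M[R[i]]_m) :
  A *m adjmx A + B *m adjmx B = 1%:M ->
  B *m adjmx A = - (conjc c *: (A *m adjmx B)) ->
  L *m adjmx L = 1%:M -> adjmx L = conjc c *: L ->
  (A *t 1%:M + B *t L) *m adjmx (A *t 1%:M + B *t L) = 1%:M.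
Proof.
move=> AB_sum BA LL L_adj.
rewrite adjmxD !adjmx_tens adjmx1 mulmxDl !mulmxDr !tensmx_mul !mulmx1 mul1mx LL L_adj BA.
rewrite tensmxNl tensmxZr tensmxZl addrA addrK -tensmxDl AB_sum.
exact: tensmx11.
Qed.

Lemma unitary_tens_addZ_opp w m (L : 'M[R[i]]_m) :
  w * conjc w = 1 -> unitary (A + w *: B) -> unitary (A + (- w) *: B) ->
  L *m adjmx L = 1%:M -> adjmx L = conjc (w ^+ 2) *: L ->
  unitary (A *t 1%:M + B *t L).
Proof.
move=> w_unit [UU _] [UU' _] LL L_adj; apply: mulmx_adj_unitary.
have [AB_sum BA] := mulmx_adj_addZ_opp w_unit UU UU'.
exact: mulmx_adj_tens AB_sum BA LL L_adj.
Qed.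

End Adjoint.

Lemma prim_root_pow2 (F : numDomainType) j (s : F) :
  s ^+ (2 ^ j) = -1 -> (2 ^ j.+1).-primitive_root s.
Proof.
move=> sX.
have s_order : s ^+ (2 ^ j.+1) = 1 by rewrite expnS mulnC exprM sX sqrrN expr1n.
have [m prim_m] := prim_order_exists (expn_gt0 2 j.+1) s_order.
case/dvdn_pfactor=> // i le_ij m_def; move: prim_m; rewrite m_def.
have [lt_ij prim_i | le_ji] := ltnP i j.+1; last first.
  by rewrite (_ : i = j.+1) //; apply/eqP; rewrite eqn_leq le_ij le_ji.
have : (2 ^ i %| 2 ^ j)%N by rewrite dvdn_Pexp2l.
rewrite (prim_order_dvd prim_i) sX -subr_eq0 -opprD oppr_eq0.
by rewrite (_ : 1 + 1 = 2%:R) // pnatr_eq0.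
Qed.

Lemma size_Xn_add1 (R : nzRingType) n : (0 < n)%N -> size ('X^n + 1 : {poly R}) = n.+1.
Proof. by move=> n_gt0; rewrite size_polyDl ?size_polyXn ?size_poly1. Qed.

Lemma irreducible_Xpow2_add1 j : irreducible_poly ('X^(2 ^ j) + 1 : {poly rat}).
Proof.
have Phi_size : size ('X^(2 ^ j) + 1 : {poly rat}) = (2 ^ j).+1.
  by rewrite size_Xn_add1 ?expn_gt0.
rewrite /irreducible_poly Phi_size ltnS expn_gt0; split=> // g g_size g_dvd.
have [s g_s] : exists s : algC, root (map_poly ratr g) s.
  by apply/closed_rootP; rewrite size_map_poly; case: (size g) g_size => [|[]].
have : root (map_poly ratr ('X^(2 ^ j) + 1 : {poly rat})) s.
  by apply: root_dvdp g_s; rewrite dvdp_map.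
rewrite /root rmorphD /= map_polyXn rmorph1 hornerD hornerXn hornerC addr_eq0.
move=> /eqP/prim_root_pow2 prim_s.
have [p [p_def _] p_dvd] := minCpolyP s.
have p_size : size p = (2 ^ j).+1.
  rewrite -(size_map_poly (ratr : rat -> algC)) -p_def (minCpoly_cyclotomic prim_s).
  by rewrite size_cyclotomic totient_pfactor // mul1n.
have p_g : p %| g by rewrite -p_dvd.
have : p %= 'X^(2 ^ j) + 1 by rewrite -dvdp_size_eqp ?Phi_size ?p_size // (dvdp_trans p_g).
by move/eqp_dvdl=> Phi_g; rewrite /eqp g_dvd -Phi_g.
Qed.

Lemma root_ratr_opp (F : numFieldType) j (w : F) (q : {poly rat}) :
  (0 < j)%N -> w ^+ (2 ^ j) = -1 ->
  root (map_poly ratr q) w -> root (map_poly ratr q) (- w).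
Proof.
move=> j_gt0 wX q_w; set Phi : {poly rat} := 'X^(2 ^ j) + 1.
have Phi_eval x : (map_poly (ratr : rat -> F) Phi).[x] = x ^+ (2 ^ j) + 1.
  by rewrite rmorphD /= map_polyXn rmorph1 hornerD hornerXn hornerC.
have g_w : root (map_poly (ratr : rat -> F) (gcdp q Phi)) w.
  by rewrite gcdp_map root_gcd; apply/andP; split; last rewrite /root Phi_eval wX addNr.
have g_size : size (gcdp q Phi) != 1.
  rewrite -(size_map_poly (ratr : rat -> F)) gtn_eqF // (root_size_gt1 _ g_w) // map_poly_eq0.
  by rewrite gcdp_eq0 negb_and orbC -size_poly_eq0 size_Xn_add1 ?expn_gt0.
have /eqp_dvdl Phi_q := (irreducible_Xpow2_add1 j).2 _ g_size (dvdp_gcdr q Phi).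
have /dvdpP [r ->] : Phi %| q by rewrite -Phi_q dvdp_gcdl.
rewrite rmorphM /root hornerM Phi_eval exprNn -signr_odd oddX eqn0Ngt j_gt0 /=.
by rewrite mul1r wX addNr mulr0.
Qed.

Section SigmaPair.
Variables (F : numFieldType) (w : F).

(* x and y are the values at w and -w of one rational polynomial; when
   w^(2^j) = -1 with j > 0 this is the graph of the automorphism w |-> -w of
   Q(w), by [root_ratr_opp]. *)
Definition sigma_pair (x y : F) :=
  exists q : {poly rat}, x = (map_poly ratr q).[w] /\ y = (map_poly ratr q).[- w].

Definition sigma_pair_mx m n (X Y : 'M[F]_(m, n)) := forall i j, sigma_pair (X i j) (Y i j).

Lemma sigma_pairD x y x' y' :
  sigma_pair x y -> sigma_pair x' y' -> sigma_pair (x + x') (y + y').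
Proof. by move=> [q [-> ->]] [q' [-> ->]]; exists (q + q'); rewrite rmorphD !hornerD. Qed.

Lemma sigma_pairN x y : sigma_pair x y -> sigma_pair (- x) (- y).
Proof. by move=> [q [-> ->]]; exists (- q); rewrite rmorphN !hornerN. Qed.

Lemma sigma_pairM x y x' y' :
  sigma_pair x y -> sigma_pair x' y' -> sigma_pair (x * x') (y * y').
Proof. by move=> [q [-> ->]] [q' [-> ->]]; exists (q * q'); rewrite rmorphM !hornerM. Qed.

Lemma sigma_pair_ratr a : sigma_pair (ratr a) (ratr a).
Proof. by exists a%:P; rewrite map_polyC !hornerC. Qed.

Lemma sigma_pair_gen : sigma_pair w (- w).
Proof. by exists 'X; rewrite map_polyX !hornerX. Qed.

Lemma sigma_pair_comp (q : {poly rat}) x y : sigma_pair x y ->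
  sigma_pair (map_poly ratr q).[x] (map_poly ratr q).[y].
Proof. by move=> [r [-> ->]]; exists (q \Po r); rewrite map_comp_poly !horner_comp. Qed.

Lemma sigma_pair_eq0 j x y : (0 < j)%N -> w ^+ (2 ^ j) = -1 ->
  sigma_pair x y -> x = 0 -> y = 0.
Proof.
by move=> j_gt0 wX [q [-> ->]] /eqP q_w; apply/eqP; apply: (root_ratr_opp j_gt0 wX).
Qed.

Lemma sigma_pair_mxD m n (X Y X' Y' : 'M_(m, n)) :
  sigma_pair_mx X Y -> sigma_pair_mx X' Y' -> sigma_pair_mx (X + X') (Y + Y').
Proof. by move=> XY XY' i j; rewrite !mxE; apply: sigma_pairD. Qed.

Lemma sigma_pair_mxZ m n a b (X Y : 'M_(m, n)) :
  sigma_pair a b -> sigma_pair_mx X Y -> sigma_pair_mx (a *: X) (b *: Y).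
Proof. by move=> ab XY i j; rewrite !mxE; apply: sigma_pairM. Qed.

Lemma sigma_pair_mxM m n p (X Y : 'M_(m, n)) (X' Y' : 'M_(n, p)) :
  sigma_pair_mx X Y -> sigma_pair_mx X' Y' -> sigma_pair_mx (X *m X') (Y *m Y').
Proof.
move=> XY XY' i j; rewrite !mxE; apply: (big_ind2 sigma_pair) => [||l _].
- by have := sigma_pair_ratr 0; rewrite rmorph0.
- exact: sigma_pairD.
- exact: sigma_pairM.
Qed.

Lemma sigma_pair_mx_eq1 j n (X Y : 'M_n) : (0 < j)%N -> w ^+ (2 ^ j) = -1 ->
  sigma_pair_mx X Y -> X = 1%:M -> Y = 1%:M.
Proof.
move=> j_gt0 wX XY X1; apply/matrixP => i k; apply/eqP; rewrite -subr_eq0; apply/eqP.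
have one_pair : sigma_pair ((1%:M : 'M_n) i k) ((1%:M : 'M_n) i k).
  by have := sigma_pair_ratr (i == k)%:R; rewrite mxE rmorph_nat.
apply: (sigma_pair_eq0 j_gt0 wX (sigma_pairD (XY i k) (sigma_pairN one_pair))).
by rewrite X1 subrr.
Qed.

End SigmaPair.

Section Conjugation.
Variable R : realType.
Implicit Types (w x y : R[i]).

Lemma conjc_odd_pow j w : w ^+ (2 ^ j) = -1 -> w * conjc w = 1 ->
  exists2 m, odd m & conjc w = w ^+ m.
Proof.
move=> wX w_unit; have N_gt0 := expn_gt0 2 j.+1.
have wN : w * w ^+ (2 ^ j.+1).-1 = 1.
  by rewrite -exprS prednK // expnS mulnC exprM wX sqrrN expr1n.
exists (2 ^ j.+1).-1; first by rewrite -[odd _]negbK -oddS prednK // oddX.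
by rewrite -[LHS]mulr1 -wN mulrA [conjc w * w]mulrC w_unit mul1r.
Qed.

Lemma ratr_conjc (q : {poly rat}) x :
  conjc (map_poly ratr q).[x] = (map_poly ratr q).[conjc x].
Proof.
rewrite -horner_map; congr horner; rewrite -map_poly_comp.
by apply: eq_map_poly => a /=; rewrite fmorph_rat.
Qed.

Lemma sigma_pair_conjc m w x y : odd m -> conjc w = w ^+ m ->
  sigma_pair w x y -> sigma_pair w (conjc x) (conjc y).
Proof.
move=> m_odd w_conj [q [-> ->]].
have wN_conj : conjc (- w) = (- w) ^+ m.
  by rewrite exprNn -signr_odd m_odd mulN1r -w_conj -rmorphN.
rewrite !ratr_conjc wN_conj w_conj.
by apply: sigma_pair_comp; exists 'X^m; rewrite map_polyXn !hornerXn.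
Qed.

Lemma sigma_pair_mx_adj m w p n (X Y : 'M_(p, n)) : odd m -> conjc w = w ^+ m ->
  sigma_pair_mx w X Y -> sigma_pair_mx w (adjmx X) (adjmx Y).
Proof.
by move=> m_odd w_conj XY i j; rewrite !mxE; apply: (sigma_pair_conjc m_odd w_conj).
Qed.

Lemma unitary_sigma j w d (A B : 'M[R[i]]_d) :
  (0 < j)%N -> w ^+ (2 ^ j) = -1 -> w * conjc w = 1 ->
  sigma_pair_mx w A A -> sigma_pair_mx w B B ->
  unitary (A + w *: B) -> unitary (A + (- w) *: B).
Proof.
move=> j_gt0 wX w_unit AA BB [UU _]; have [m m_odd w_conj] := conjc_odd_pow wX w_unit.
have U_pair : sigma_pair_mx w (A + w *: B) (A + (- w) *: B).
  exact: sigma_pair_mxD AA (sigma_pair_mxZ (sigma_pair_gen w) BB).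
apply: mulmx_adj_unitary; apply: (sigma_pair_mx_eq1 j_gt0 wX _ UU).
exact: sigma_pair_mxM U_pair (sigma_pair_mx_adj m_odd w_conj U_pair).
Qed.

End Conjugation.

Section Lambda.
Variable R : realType.

Lemma adjmx_Lambda k : adjmx (Lambda R k) = conjc (zeta R (2 ^ k.-1)) *: Lambda R k.
Proof.
apply/matrixP => a b; rewrite /adjmx !mxE !(fun_if conjc) rmorph0 rmorph1.
case: a => [[|[|a]]] // ?; case: b => [[|[|b]]] // ?; rewrite /= ?mulr0 ?mulr1 //.
by rewrite mulrC zeta_mul_conjc.
Qed.

Lemma Lambda_mulmx_adj k : Lambda R k *m adjmx (Lambda R k) = 1%:M.
Proof.
(* Naming the conjugate keeps [/=] below from unfolding it. *)
have := zeta_mul_conjc R (2 ^ k.-1); set c := conjc _ => zc.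
rewrite adjmx_Lambda; apply/matrixP => a b.
rewrite !mxE !big_ord_recr big_ord0 /= !mxE.
case: a => [[|[|a]]] // ?; case: b => [[|[|b]]] // ?;
  by rewrite /= ?mulr0 ?mulr1 ?mul0r ?mul1r ?add0r ?addr0 // mulrC.
Qed.

End Lambda.

Section ZHalf.
Variables (R : realType) (z : R[i]).

Lemma in_Z_half_zetaD x y :
  in_Z_half_zeta z x -> in_Z_half_zeta z y -> in_Z_half_zeta z (x + y).
Proof.
move=> [p [m ->]] [q [n ->]]; exists (p * (2 ^+ n)%:P + q * (2 ^+ m)%:P), (m + n)%N.
rewrite rmorphD !rmorphM /= !map_polyC /= hornerD !hornerM !hornerC !rmorphXn /= exprD.
have two_neq0 : (2%:R : R[i]) != 0 by rewrite pnatr_eq0.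
by rewrite (_ : 2%:~R = 2%:R :> R[i]) //; field; rewrite !expf_neq0.
Qed.

Lemma in_Z_half_zetaM x y :
  in_Z_half_zeta z x -> in_Z_half_zeta z y -> in_Z_half_zeta z (x * y).
Proof.
move=> [p [m ->]] [q [n ->]]; exists (p * q), (m + n)%N.
by rewrite rmorphM /= hornerM exprD invfM mulrACA.
Qed.

Lemma in_Z_half_zeta_nat n : in_Z_half_zeta z n%:R.
Proof. by exists n%:R%:P, 0%N; rewrite map_polyC hornerC /= rmorph_nat expr0 divr1. Qed.

Lemma in_Z_half_zeta_gen : in_Z_half_zeta z z.
Proof. by exists 'X, 0%N; rewrite map_polyX hornerX expr0 divr1. Qed.

End ZHalf.

Lemma sigma_pair_Z_half_sqr (R : realType) (w x : R[i]) :
  in_Z_half_zeta (w ^+ 2) x -> sigma_pair w x x.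
Proof.
move=> [p [m ->]].
have int_rat : map_poly intr p = map_poly ratr (map_poly intr p : {poly rat}) :> {poly R[i]}.
  by rewrite -map_poly_comp; apply: eq_map_poly => a /=; rewrite rmorph_int.
apply: sigma_pairM.
  have := sigma_pair_comp (map_poly intr p) (sigma_pairM (sigma_pair_gen w) (sigma_pair_gen w)).
  by rewrite mulrNN -expr2 -int_rat.
have := sigma_pair_ratr w (2 ^+ m)^-1.
by rewrite fmorphV rmorphXn rmorph_nat.
Qed.

Theorem lemma2 (R : realType) (k d : nat) (hk : (2 <= k)%N)
  (A B : 'M[R[i]]_d)
  (hA : forall i j, in_Z_half_zeta (zeta R (2 ^ k.-1)) (A i j))
  (hB : forall i j, in_Z_half_zeta (zeta R (2 ^ k.-1)) (B i j))
  (hU : unitary (A + zeta R (2 ^ k) *: B)) :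
  unitary (A *t (1%:M : 'M[R[i]]_2) + B *t Lambda R k) /\
  (forall i j, in_Z_half_zeta (zeta R (2 ^ k.-1))
                 ((A *t (1%:M : 'M[R[i]]_2) + B *t Lambda R k) i j)).
Proof.
split; last first.
  move=> a b; rewrite !mxE; apply: in_Z_half_zetaD; apply: in_Z_half_zetaM => //.
    exact: in_Z_half_zeta_nat.
  case: ifP => _; first exact: (in_Z_half_zeta_nat _ 1).
  by case: ifP => _; [exact: in_Z_half_zeta_gen | exact: (in_Z_half_zeta_nat _ 0)].
case: k hk hA hB hU => [|j] // j_gt0 hA hB hU; set w := zeta R (2 ^ j.+1).
have j_pos : (0 < 2 ^ j)%N := expn_gt0 2 j.
have w_sqr : zeta R (2 ^ j.+1.-1) = w ^+ 2 by rewrite /w expnS zeta_double_sqr.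
have wX : w ^+ (2 ^ j) = -1 by rewrite /w expnS zeta_double_half.
have w_unit : w * conjc w = 1 := zeta_mul_conjc R _.
rewrite w_sqr in hA hB.
have hU' := unitary_sigma j_gt0 wX w_unit
  (fun a b => sigma_pair_Z_half_sqr (hA a b)) (fun a b => sigma_pair_Z_half_sqr (hB a b)) hU.
apply: unitary_tens_addZ_opp w_unit hU hU' (Lambda_mulmx_adj R _) _.
by rewrite adjmx_Lambda w_sqr.
Qed.
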